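(* For every integer $k\ge2$, the independent user partition multicast scheme is optimal for the $(k,2)$-GIC problem (defined in the context), i.e. $\beta_{IUPM}=\beta$, where $\beta$ is the optimal broadcast rate of that problem.
   Context: GIC problem: there are $m$ packets $x_1,\dots,x_m$, each a binary string of length $t$; for each $i\in[m]$ there is a nonempty set $U_i=\{u_i^1,\dots,u_i^{|U_i|}\}$ of users demanding $x_i$, $U=\bigcup_iU_i$; user $u_i^j$ knows the packets $x_{i'}$, $i'\in A_i^j\subseteq[m]\setminus\{i\}$. An index code of length $r$ for packet length $t$ is an encoder $\phi:(\{0,1\}^t)^m\to\{0,1\}^r$ with decoders $\psi_i^j$ recovering $x_i$ from $\phi(x_1,\dots,x_m)$ and $(x_{i'})_{i'\in A_i^j}$ for all packet values; $\beta=\inf_t\inf r/t$. IUPM rate: for a partition of $U$ into nonempty disjoint sets $W_1,\dots,W_h$ ($1\le h\le m$), let $Y_e=\{i:u_i^j\in W_e\text{ for some }j\}$, $c_e=\min\{|A_i^j\cap Y_e|:u_i^j\in W_e\}$, $b_e=|Y_e|-c_e$. Over a field $\mathbb F=GF(2^s)$ (packets viewed as vectors over $\mathbb F$, combinations componentwise), a valid coefficient choice gives, for each $e$, $b_e$ vectors $\alpha\in\mathbb F^m$ supported on $Y_e$ such that each user $u_i^j\in W_e$ can recover $x_i$ from the combinations $\sum_{i'}\alpha_{i'}x_{i'}$ and its side information. $\mathbf N$ is the matrix of all these vectors as rows; the IUPM rate of the partition is the minimum of $\operatorname{rank}\mathbf N$ over $s$ and valid choices, and $\beta_{IUPM}$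 is its minimum over all user partitions. The $(k,2)$-GIC problem: $m=k(k-1)/2$, $U_i=\{u_i^1,u_i^2\}$ for all $i$. For $l\in[k]$: $I_l^1=\{(l-1)k+a-\tfrac{l(l-1)}{2}: a=1,\dots,k-l\}$ ($l\ne k$), $I_k^1=\emptyset$; $I_l^2=\{(a-1)k+l-\tfrac{a(a+1)}{2}: a=1,\dots,l-1\}$ ($l\ne1$), $I_1^2=\emptyset$; $I_l=I_l^1\cup I_l^2$. User $u_i^j$ has $A_i^j=I_l\setminus\{i\}$ where $l$ is the index with $i\in I_l^j$. *)

From HB Require Import structures.
From mathcomp Require Import all_boot all_order all_algebra.
From mathcomp Require Import classical_sets reals.
Set Implicit Arguments. Unset Strict Implicit. Unset Printing Implicit Defensive.
Import Order.TTheory GRing.Theory Num.Theory.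
Local Open Scope ring_scope.

(* Packets are indexed by 'I_gm (packet i of the paper is ordinal i-1).
   Users form a finite type; user u demands packet gdem u and knows the
   packets in gside u. *)
Record gic := Gic {
  gm : nat;
  guser : finType;
  gdem : guser -> 'I_gm;
  gside : guser -> {set 'I_gm} }.
Arguments gdem {g}.
Arguments gside {g}.

Definition bits (t : nat) := {ffun 'I_t -> bool}.
Definition packets (G : gic) (t : nat) := {ffun 'I_(gm G) -> bits t}.

Definition mask (G : gic) (t : nat) (A : {set 'I_(gm G)}) (x : packets G t)
  : packets G t := [ffun i => if i \in A then x i else [ffun => false]].

Definition is_index_code (G : gic) (t r : nat) (phi : packets G t -> bits r) :=
  exists psi : guser G -> bits r -> packets G t -> bits t,
    forall (u : guser G) (x : packets G t),
      psi u (phi x) (mask (gside u) x) = x (gdem u).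

Definition has_index_code (G : gic) (t r : nat) :=
  exists phi : packets G t -> bits r, is_index_code phi.

Definition beta (R : realType) (G : gic) : R :=
  inf [set q : R | exists t r : nat,
         (0 < t)%N /\ has_index_code G t r /\ q = (r%:R / t%:R)%R].

Definition Yset (G : gic) (W : {set guser G}) : {set 'I_(gm G)} := gdem @: W.
(* c_e = min over users of W of |A_u :&: Y_e|; the seed #|Y_e| is an upper
   bound of all terms, so for nonempty W this is exactly the minimum. *)
Definition cval (G : gic) (W : {set guser G}) : nat :=
  \big[minn/#|Yset W|]_(u in W) #|gside u :&: Yset W|.
Definition bval (G : gic) (W : {set guser G}) : nat := (#|Yset W| - cval W)%N.

(* A valid coefficient choice over F for partition P: for each block W,
   b_W row vectors (rows of M W) supported on Y_W, from whose combinations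
   (M W *m x) and its side information every user of W recovers its packet. *)
Definition iupm_valid (F : fieldType) (G : gic) (P : {set {set guser G}})
  (M : forall W : {set guser G}, 'M[F]_(bval W, gm G)) : Prop :=
  forall W, W \in P ->
    (forall (j : 'I_(bval W)) (i : 'I_(gm G)), i \notin Yset W -> M W j i = 0%R)
    /\ (forall u, u \in W ->
         exists dec : 'cV[F]_(bval W) -> 'cV[F]_(gm G) -> F,
           forall x : 'cV[F]_(gm G),
             dec (M W *m x) (\col_i (if i \in gside u then x i 0 else 0%R))
               = x (gdem u) 0).

(* rank of N (all rows of all blocks stacked) = rank of the sum of the
   row spaces of the blocks *)
Definition iupm_rank (F : fieldType) (G : gic) (P : {set {set guser G}})
  (M : forall W : {set guser G}, 'M[F]_(bval W, gm G)) : nat :=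
  \rank (\sum_(W in P) <<M W>>)%MS.

Definition iupm_achievable (G : gic) (P : {set {set guser G}}) (n : nat) : Prop :=
  exists (F : finFieldType) (s : nat), (0 < s)%N /\ #|F| = (2 ^ s)%N /\
    exists M : forall W : {set guser G}, 'M[F]_(bval W, gm G),
      iupm_valid P M /\ iupm_rank P M = n.

Definition beta_IUPM (R : realType) (G : gic) : R :=
  inf [set q : R | exists (P : {set {set guser G}}) (n : nat),
         finset.partition P [set: guser G] /\ (0 < #|P| <= gm G)%N /\
         iupm_achievable P n /\ q = (n%:R)%R].

(* 1-based index sets of the paper *)
Definition I1 (k l : nat) : seq nat :=
  if (l != k) then [seq ((l - 1) * k + a - l * (l - 1) %/ 2)%N | a <- iota 1 (k - l)]
  else [::].
Definition I2 (k l : nat) : seq nat :=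
  if (l != 1) then [seq ((a - 1) * k + l - a * (a + 1) %/ 2)%N | a <- iota 1 (l - 1)]
  else [::].
(* j : 'I_2 encodes the superscript (0 -> I^1, 1 -> I^2) *)
Definition Ij (k l : nat) (j : 'I_2) : seq nat := if val j == 0%N then I1 k l else I2 k l.
Definition Il (k l : nat) : seq nat := I1 k l ++ I2 k l.

Definition km (k : nat) : nat := (k * (k - 1) %/ 2)%N.

(* user u_i^j = (i, j); A_i^j = I_l \ {i} where i \in I_l^j, l in [k] *)
Definition kside (k : nat) (u : ('I_(km k) * 'I_2)%type) : {set 'I_(km k)} :=
  [set i' : 'I_(km k) | (i' != u.1) &&
     [exists l : 'I_k.+1, [&& (0 < val l)%N, (u.1.+1 \in Ij k l u.2)
                            & (i'.+1 \in Il k l)]]].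

Definition kgic (k : nat) : gic :=
  @Gic (km k) ('I_(km k) * 'I_2)%type (fun u => u.1) (@kside k).

(* Packets of the (k,2)-GIC are the edges of the complete graph on k vertices, and a user
   demanding an edge knows all other edges at one endpoint of it.  Grouping the users by that
   endpoint, each block has as side information a star minus the demanded edge, so one GF(2)
   sum of the star serves the whole block.  Every edge lies in exactly two stars, so the k
   star sums add up to zero and span at most k-1 dimensions: the IUPM rate is at most k-1.
   Conversely the k-1 edges at one vertex form an independent set (the user of such an edge
   sitting at its other endpoint knows none of them), so every index code needs r >= (k-1)t.
   Since an IUPM solution over GF(2^s) is itself an index code, beta <= beta_IUPM, and both
   are equal to k-1. *)
From Pilot Require Import Defs.
From mathcomp Require Import all_boot all_order all_algebra.
From mathcomp Require Import reals zify.
Set Implicit Arguments. Unset Strict Implicit. Unset Printing Implicit Defensive.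
Import Order.TTheory GRing.Theory Num.Theory.

Lemma bij_of_eq_card (A B : finType) : #|A| = #|B| ->
  exists f : A -> B, exists g : B -> A, cancel f g /\ cancel g f.
Proof.
move=> h; exists (fun a => enum_val (cast_ord h (enum_rank a))),
  (fun b => enum_val (cast_ord (esym h) (enum_rank b))).
by split => x; rewrite enum_valK ?cast_ordK ?cast_ordKV enum_rankK.
Qed.

Section IndexCodes.
Variable G : gic.

Lemma independent_index_code_lb (S : {set 'I_(gm G)}) t r :
  (forall i, i \in S -> exists2 u, gdem u = i & [disjoint gside u & S]) ->
  has_index_code G t r -> #|S| * t <= r.
Proof.
move=> hS [phi [psi hpsi]].
pose emb (y : {ffun {i | i \in S} -> bits t}) : packets G t :=
  [ffun i => if insub i is Some s then y s else [ffun => false]].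
have emb_inj : injective (phi \o emb).
  move=> y z /= e; apply/ffunP => s.
  have [u hu hdisj] := hS _ (valP s).
  have hmask : Defs.mask (gside u) (emb y) = Defs.mask (gside u) (emb z).
    apply/ffunP => i; rewrite !ffunE; case: ifP => // hi.
    by rewrite insubN // (disjointFr hdisj hi).
  have := hpsi u (emb y); rewrite e hmask hpsi hu !ffunE.
  by rewrite valK => ->.
have := @leq_card _ _ (phi \o emb) emb_inj.
by rewrite !card_ffun card_sig !card_bool !card_ord -expnM leq_exp2l // mulnC cardE.
Qed.

Local Open Scope ring_scope.

(* Identify GF(2^s) with bits s and send the coordinates of N x in a basis of the row
   space of N; each user recomputes the combinations of its block from them. *)
Lemma iupm_index_code P n : partition P [set: guser G] ->
  iupm_achievable P n -> exists2 s, (0 < s)%N & has_index_code G s (n * s).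
Proof.
move=> hP [F [s [s_gt0 [cardF [M [hM <-]]]]]]; exists s => //.
set S := (\sum_(W in P) <<M W>>)%MS; pose B := row_base S.
have hcov : cover P = [set: guser G] by case/and3P: hP => /eqP.
have [toF [ofF [toFK _]]] : exists f : bits s -> F, exists g, cancel f g /\ cancel g f.
  by apply: bij_of_eq_card; rewrite card_ffun card_bool card_ord cardF.
have [enc [dec_enc [encK _]]] :
    exists f : 'cV[F]_(\rank S) -> bits (\rank S * s), exists g, cancel f g /\ cancel g f.
  apply: bij_of_eq_card.
  by rewrite card_mx card_ffun card_bool card_ord cardF muln1 -expnM mulnC.
have dec_ex u : exists dec : 'cV[F]_(bval (pblock P u)) -> 'cV[F]_(gm G) -> F,
    forall x, dec (M (pblock P u) *m x) (\col_i (if i \in gside u then x i 0 else 0))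
              = x (gdem u) 0.
  have hu : u \in cover P by rewrite hcov inE.
  by have [_] := hM _ (pblock_mem hu); apply; rewrite mem_pblock.
have [dec decP] := fin_all_exists dec_ex.
pose xv (x : packets G s) : 'cV[F]_(gm G) := \col_i toF (x i).
exists (fun x => enc (B *m xv x)),
  (fun u c xm => ofF (dec u (M (pblock P u) *m pinvmx B *m dec_enc c)
                             (\col_i (if i \in gside u then toF (xm i) else 0)))).
move=> u x; have hu : u \in cover P by rewrite hcov inE.
have sub_B : (M (pblock P u) <= B)%MS.
  by rewrite eq_row_base -genmxE; apply: (sumsmx_sup (pblock P u)) (pblock_mem hu) _.
rewrite encK mulmxA mulmxKpV //.
have -> : \col_i (if i \in gside u then toF (Defs.mask (gside u) x i) else 0)
          = \col_i (if i \in gside u then xv x i 0 else 0) :> 'cV[F]_(gm G).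
  by apply/colP => i; rewrite !mxE ffunE; case: (i \in gside u).
by rewrite decP mxE toFK.
Qed.

End IndexCodes.

Section OnesCode.
Local Open Scope ring_scope.

Definition setrow (F : fieldType) m (A : {set 'I_m}) : 'rV[F]_m := \row_i (i \in A)%:R.

Lemma setrow_mul (F : fieldType) m (A : {set 'I_m}) (x : 'cV[F]_m) :
  (setrow F A *m x) 0 0 = \sum_(i in A) x i 0.
Proof.
rewrite mxE [RHS]big_mkcond; apply: eq_bigr => i _.
by rewrite mxE; case: (i \in A); rewrite ?mul1r ?mul0r.
Qed.

Variables (F : fieldType) (G : gic).

Definition all_but_demand (W : {set guser G}) : Prop :=
  forall u, u \in W -> gside u :&: Yset W = Yset W :\ gdem u.

Definition ones_code (W : {set guser G}) : 'M[F]_(bval W, gm G) :=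
  \matrix_(j, i) (i \in Yset W)%:R.

Lemma ones_code_sub W : (ones_code W <= setrow F (Yset W))%MS.
Proof.
apply/row_subP => j; rewrite (_ : row j _ = setrow F (Yset W)) ?submx_refl //.
by apply/rowP => i; rewrite !mxE.
Qed.

Lemma bval_all_but_demand W : W != set0 -> all_but_demand W -> bval W = 1%N.
Proof.
move=> /set0Pn[u0 hu0] hW; set Y := Yset W.
have demY u : u \in W -> gdem u \in Y by move=> hu; apply: imset_f.
have hc : cval W = (#|Y| - 1)%N.
  rewrite /cval (eq_bigr (fun=> (#|Y| - 1)%N)) => [|u hu]; last first.
    by rewrite hW // (cardsD1 (gdem u) Y) (demY u hu) add1n subn1.
  rewrite big_const; have : (0 < #|W|)%N by apply/card_gt0P; exists u0.
  case: #|W| => // n _; rewrite iterS; apply/minn_idPl.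
  by elim: n => [|n IH]; rewrite ?leq_subr // iterS leq_min leqnn.
have : (0 < #|Y|)%N by apply/card_gt0P; exists (gdem u0); apply: demY.
by rewrite /bval hc -/Y; lia.
Qed.

Lemma ones_code_valid (P : {set {set guser G}}) :
  set0 \notin P -> (forall W, W \in P -> all_but_demand W) -> iupm_valid P ones_code.
Proof.
move=> P0 hP W hW; split=> [j i hi|u hu]; first by rewrite mxE (negbTE hi).
have hb : bval W = 1%N by apply: bval_all_but_demand (hP W hW); apply: contraNneq P0 => <-.
pose j0 := cast_ord (esym hb) ord0.
exists (fun y xs => y j0 0 - \sum_(i in Yset W) xs i 0) => x.
have -> : (ones_code W *m x) j0 0 = (setrow F (Yset W) *m x) 0 0.
  by rewrite !mxE; apply: eq_bigr => i _; rewrite !mxE.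
have -> : \sum_(i in Yset W) (\col_i (if i \in gside u then x i 0 else 0)) i 0
          = \sum_(i in Yset W :\ gdem u) x i 0.
  rewrite -(hP W hW u hu) [RHS]big_mkcond [LHS]big_mkcond; apply: eq_bigr => i _.
  by rewrite !inE mxE andbC; case: (i \in Yset W); case: (i \in gside u).
by rewrite setrow_mul (big_setD1 (gdem u)) ?addrK //; apply: imset_f.
Qed.

End OnesCode.

Arguments ones_code F {G} W.

Lemma ones_code_achievable (G : gic) (P : {set {set guser G}}) :
  partition P [set: guser G] -> (forall W, W \in P -> all_but_demand W) ->
  iupm_achievable P (iupm_rank P (ones_code 'F_2)).
Proof.
move=> /and3P[_ _ P0] hP; exists 'F_2, 1; split=> //; split; first by rewrite card_Fp.
by exists (ones_code 'F_2); split=> //; apply: ones_code_valid.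
Qed.

Section Optimality.
Local Open Scope ring_scope.
Variables (R : realType) (G : gic) (m : nat).
Hypothesis code_lb : forall t r, has_index_code G t r -> (m * t <= r)%N.

Lemma inf_eq_min (E : R -> Prop) x : E x -> (forall y, E y -> x <= y) -> inf E = x.
Proof.
move=> Ex lbx; apply/le_anti/andP; split; first exact: ge_inf (ex_intro _ x lbx) _ Ex.
by apply: lb_le_inf => //; exists x.
Qed.

Lemma iupm_rate_ge P n : partition P [set: guser G] -> iupm_achievable P n -> (m <= n)%N.
Proof.
move=> hP hA; have [s s_gt0 hcode] := iupm_index_code hP hA.
by rewrite -(leq_pmul2r s_gt0); apply: code_lb.
Qed.

Lemma iupm_optimal P n : partition P [set: guser G] -> (0 < #|P| <= gm G)%N ->
  iupm_achievable P n -> (n <= m)%N -> beta_IUPM R G = beta R G.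
Proof.
move=> hP hPcard hA hn; have en : n = m by apply/eqP; rewrite eqn_leq hn (iupm_rate_ge hP hA).
have [s s_gt0 hcode] := iupm_index_code hP hA; subst n.
have -> : beta_IUPM R G = m%:R.
  apply: inf_eq_min; first by exists P, m.
  by move=> _ [P' [n' [hP' [_ [hA' ->]]]]]; rewrite ler_nat (iupm_rate_ge hP' hA').
apply/esym/inf_eq_min.
  by exists s, (m * s)%N; split=> //; split=> //; rewrite natrM mulfK // pnatr_eq0 -lt0n.
move=> _ [t [r [t_gt0 [hcode' ->]]]].
by rewrite ler_pdivlMr ?ltr0n // -natrM ler_nat; apply: code_lb.
Qed.

End Optimality.

(* Vertices of K_k are 0, ..., k-1; edge_pkt k b c (b < c) is the paper's 1-based number of
   the packet of the edge {b, c}, and I_{n+1} lists the edges at vertex n, those of I^1 (resp.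
   I^2) having n as smaller (resp. larger) endpoint. *)
Section EdgeNumbering.
Variable k : nat.

Fixpoint edge_offset (b : nat) : nat :=
  if b is b'.+1 then edge_offset b' + (k - b) else 0.

Definition edge_pkt (b c : nat) : nat := edge_offset b + (c - b).

Lemma edge_pkt0 c : edge_pkt 0 c = c.
Proof. by rewrite /edge_pkt subn0. Qed.

Lemma edge_offset_mono : {homo edge_offset : a b / a <= b}.
Proof.
move=> a b /subnK <-; elim: (b - a) => [|d IH] //.
by rewrite addSn /=; apply: leq_trans IH (leq_addr _ _).
Qed.

Lemma edge_offset_bin b : b < k -> 'C(b.+1, 2) + edge_offset b = b * k.
Proof. by elim: b => [|b IH] // hb; rewrite binS bin1 /=; have := IH (ltnW hb); nia. Qed.

Lemma edge_pkt_inj b c b' c' : b < c < k -> b' < c' < k ->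
  edge_pkt b c = edge_pkt b' c' -> b = b' /\ c = c'.
Proof.
have lt_pkt x y x' y' : x < y < k -> x' < y' -> x < x' -> edge_pkt x y < edge_pkt x' y'.
  move=> hxy hxy' /edge_offset_mono /=; rewrite /edge_pkt; lia.
move=> hbc hbc' e; case: (ltngtP b b') => hb.
- by have := lt_pkt _ _ _ _ hbc (proj1 (andP hbc')) hb; rewrite e ltnn.
- by have := lt_pkt _ _ _ _ hbc' (proj1 (andP hbc)) hb; rewrite e ltnn.
- by move: e; rewrite /edge_pkt hb; lia.
Qed.

Lemma km_edge_offset : 0 < k -> km k = edge_offset k.-1.
Proof.
move=> hk; have := edge_offset_bin (_ : k.-1 < k); rewrite prednK // => /(_ (leqnn k)).
have bin2_double n : 'C(n, 2) * 2 = n * n.-1.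
  by elim: n => [|[|n] IH] //; rewrite binS bin1 mulnDl IH; nia.
have -> : km k = 'C(k, 2) by rewrite /km bin2 -divn2 subn1.
by have := bin2_double k; nia.
Qed.

Lemma leq_pred_km : 1 < k -> k.-1 <= km k.
Proof.
move=> hk; rewrite km_edge_offset; last lia.
by have /= := @edge_offset_mono 1 k.-1; rewrite subn1; lia.
Qed.

Lemma leq_km : 2 < k -> k <= km k.
Proof.
move=> hk; rewrite km_edge_offset; last lia.
by have /= := @edge_offset_mono 2 k.-1; rewrite subn1; lia.
Qed.

Lemma packet_edge (i : 'I_(km k)) : exists b c, [/\ b < c, c < k & i.+1 = edge_pkt b c].
Proof.
have hk : 0 < k by case: k i => // -[].
have hi : i.+1 <= edge_offset k.-1 by rewrite -km_edge_offset.
have [b hb hi'] : exists2 b, b < k.-1 & edge_offset b < i.+1 <= edge_offset b.+1.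
  elim: k.-1 hi => [|N IH] //= hN.
  case: (leqP i.+1 (edge_offset N)) => h; last by exists N; rewrite ?h.
  by have [b hb hb'] := IH h; exists b; first exact: ltnW.
exists b, (b + (i.+1 - edge_offset b)); move: hi' => /=; rewrite /edge_pkt; split; lia.
Qed.

Lemma I1_edges n : n < k -> I1 k n.+1 = [seq edge_pkt n c | c <- iota n.+1 (k - n.+1)].
Proof.
move=> hn; rewrite /I1 -addn1 iotaDl -map_comp; case: eqP => [->|_]; first by rewrite subnn.
apply: eq_map => a /=; have := edge_offset_bin hn.
rewrite bin2 -divn2 /edge_pkt; lia.
Qed.

Lemma I2_edges n : n < k -> I2 k n.+1 = [seq edge_pkt b n | b <- iota 0 n].
Proof.
move=> hn; rewrite /I2 eqSS; case: eqP => [-> //|_].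
rewrite subn1 /= (iotaDl 1 0) -map_comp; apply/eq_in_map => b; rewrite mem_iota /= => hb.
have := @edge_offset_bin b ltac:(lia); rewrite add1n.
have -> : b.+1 * (b.+1 + 1) %/ 2 = 'C(b.+2, 2) by rewrite bin2 -divn2 addn1 mulnC.
rewrite !binS bin1 bin0 subSS subn0 /edge_pkt; lia.
Qed.

Section Incidence.
Variables b c : nat.
Hypothesis hbc : b < c < k.

Lemma mem_I1_edge n : n < k -> (edge_pkt b c \in I1 k n.+1) = (n == b).
Proof.
move=> hn; rewrite I1_edges //; apply/mapP/eqP => [[c' hc' e]|->].
  by have [] := edge_pkt_inj hbc (_ : n < c' < k) e => //; move: hc'; rewrite mem_iota; lia.
by exists c; rewrite // mem_iota; lia.
Qed.

Lemma mem_I2_edge n : n < k -> (edge_pkt b c \in I2 k n.+1) = (n == c).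
Proof.
move=> hn; rewrite I2_edges //; apply/mapP/eqP => [[b' hb' e]|->].
  by have [] := edge_pkt_inj hbc (_ : b' < n < k) e => //; move: hb'; rewrite mem_iota; lia.
by exists b; rewrite // mem_iota; lia.
Qed.

Lemma mem_Il_edge n : n < k -> (edge_pkt b c \in Il k n.+1) = (n == b) || (n == c).
Proof. by move=> hn; rewrite mem_cat mem_I1_edge ?mem_I2_edge. Qed.

End Incidence.

Lemma mem_Il_edge0 j n : j < k.-1 -> n < k -> (j.+1 \in Il k n.+1) = (n == 0) || (n == j.+1).
Proof. by move=> hj hn; rewrite -[X in X \in _]edge_pkt0 mem_Il_edge //; lia. Qed.

End EdgeNumbering.

(* kblock k n is the paper's W_{n+1}: the users whose side information lies in the star at
   vertex n. *)
Section KBlocks.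
Variable k : nat.

Definition kstar (n : nat) : {set 'I_(km k)} := [set i : 'I_(km k) | i.+1 \in Il k n.+1].

Definition kblock (n : nat) : {set guser (kgic k)} :=
  [set u : guser (kgic k) | u.1.+1 \in Ij k n.+1 u.2].

Lemma kblock_unique (u : guser (kgic k)) :
  exists2 v, v < k & forall n, n < k -> (u \in kblock n) = (n == v).
Proof.
have [b [c [hb hc hu]]] := packet_edge u.1.
have hbc : b < c < k by rewrite hb.
exists (if val u.2 == 0 then b else c) => [|n hn]; first by case: ifP; lia.
by rewrite inE hu /Ij; case: ifP => _; rewrite (mem_I1_edge, mem_I2_edge).
Qed.

Lemma kside_kblock (u : guser (kgic k)) n :
  n < k -> u \in kblock n -> kside u = kstar n :\ u.1.
Proof.
move=> hn hu; have [v _ uniq_u] := kblock_unique u.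
apply/setP => i; rewrite !inE; congr (_ && _); apply/existsP/idP.
- move=> [[[|l] hl] /and3P[//= _ hul hi]].
  have hlk : l < k by lia.
  have hul' : u \in kblock l by rewrite inE.
  rewrite uniq_u // in hu; rewrite uniq_u // in hul'.
  by rewrite (eqP hu) -(eqP hul').
- move=> hi; have hnk : n.+1 < k.+1 by lia.
  by exists (Ordinal hnk); rewrite /= hi andbT; rewrite inE in hu.
Qed.

Lemma Yset_kblock n : Yset (kblock n) = kstar n.
Proof.
apply/setP => i; rewrite inE; apply/imsetP/idP.
- by move=> [u]; rewrite inE /Ij mem_cat => + ->; case: ifP => _ ->; rewrite ?orbT.
- rewrite mem_cat => /orP[h|h]; first by exists (i, ord0); rewrite // inE.
  by exists (i, Ordinal (isT : 1 < 2)); rewrite // inE.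
Qed.

Lemma kblock_all_but_demand n : n < k -> all_but_demand (kblock n).
Proof.
move=> hn u hu; rewrite Yset_kblock /= (kside_kblock hn hu).
by apply/setIidPl/subsetP => i; rewrite !inE => /andP[].
Qed.

Hypothesis k_gt1 : 1 < k.

Lemma kblock_neq0 n : n < k -> kblock n != set0.
Proof.
move=> hn; have hc : n.-1 < k.-1 by lia.
have hi : Ordinal (leq_trans hc (leq_pred_km k_gt1)) \in Yset (kblock n).
  by rewrite Yset_kblock inE /= mem_Il_edge0 //; case: n {hn hc} => [|m]; rewrite eqxx ?orbT.
by apply: contraTneq hi => ->; rewrite /Yset imset0 inE.
Qed.

Definition kblocks : {set {set guser (kgic k)}} := [set kblock n | n : 'I_k].

Lemma kblocks_partition : partition kblocks [set: guser (kgic k)].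
Proof.
apply/and3P; split.
- apply/eqP/setP => u; rewrite inE; apply/bigcupP.
  have [v hv uniq_u] := kblock_unique u; exists (kblock v); last by rewrite uniq_u.
  by apply/imsetP; exists (Ordinal hv).
- apply/trivIsetP => _ _ /imsetP[n _ ->] /imsetP[n' _ ->] neq.
  rewrite -setI_eq0; apply/eqP/setP => u; rewrite in_setI in_set0.
  apply/negP => /andP[hn hn'].
  have [v _ uniq_u] := kblock_unique u.
  by move: hn hn' neq; rewrite !uniq_u // => /eqP -> /eqP ->; rewrite eqxx.
- by apply/imsetP => -[n _ /esym/eqP]; apply/negP/kblock_neq0.
Qed.

(* The k-1 packets 0, ..., k-2 are the edges {0, c}; the user of {0, c} placed at c knows
   only edges at c, hence none of them. *)
Lemma kgic_code_lb t r : has_index_code (kgic k) t r -> k.-1 * t <= r.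
Proof.
pose S := [set widen_ord (leq_pred_km k_gt1) j | j : 'I_k.-1].
have -> : k.-1 = #|S|.
  by rewrite card_imset ?card_ord // => i j /(congr1 val) /= /val_inj.
apply: independent_index_code_lb => _ /imsetP[j _ ->].
pose u : guser (kgic k) := (widen_ord (leq_pred_km k_gt1) j, Ordinal (isT : 1 < 2)).
have hj : j.+1 < k by have := ltn_ord j; lia.
have hu : u \in kblock j.+1.
  by rewrite inE /= -[X in X \in _](edge_pkt0 k) mem_I2_edge //; lia.
exists u => //; rewrite /= (kside_kblock hj hu) disjoint_subset.
apply/subsetP => i /setD1P[ne]; rewrite !inE => hi; apply/imsetP => -[j' _ e].
move: ne hi; rewrite e /= (mem_Il_edge0 (ltn_ord j')) //=.
by rewrite eqSS => /negP ne /eqP ejj'; apply: ne; apply/eqP/val_inj.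
Qed.

End KBlocks.

Section KRank.
Local Open Scope ring_scope.

Lemma sumr_ord_eq (R : nzRingType) n a : \sum_(i < n) ((i == a :> nat)%:R : R) = (a < n)%:R.
Proof.
rewrite -(big_mkord xpredT (fun i => ((i == a)%:R : R))).
rewrite (eq_bigr (fun i => if i == a then 1 else 0)) => [|i _]; last by case: eqP.
by rewrite -big_mkcond big_nat1_eq /=; case: ltnP.
Qed.

Variable k : nat.

(* Every edge lies in exactly two stars. *)
Lemma sum_kstar_rows : \sum_(n < k) setrow 'F_2 (kstar k n) = 0.
Proof.
apply/rowP => i; rewrite summxE mxE.
have [b [c [hbc hck ei]]] := packet_edge i.
have hb : (b < k)%N by apply: ltn_trans hck.
rewrite (eq_bigr (fun n : 'I_k => (n == b :> nat)%:R + (n == c :> nat)%:R)) => [|n _].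
  by rewrite big_split /= !sumr_ord_eq hb hck -natrD pchar_Fp_0.
rewrite mxE inE ei mem_Il_edge ?hbc // -natrD.
by congr (_%:R); case: eqP => [->|_]; case: eqP => //; lia.
Qed.

Definition kstar_mx : 'M['F_2]_(k, km k) := \matrix_(n < k) setrow 'F_2 (kstar k n).

Lemma rank_kstar_mx : (0 < k)%N -> (\rank kstar_mx <= k.-1)%N.
Proof.
move=> hk; pose ones : 'rV['F_2]_k := const_mx 1.
have ones_ker : (ones <= kermx kstar_mx)%MS.
  apply/sub_kermxP; rewrite mulmx_sum_row -[RHS]sum_kstar_rows.
  by apply: eq_bigr => n _; rewrite mxE scale1r rowK.
have ones_neq0 : ones != 0.
  by apply/eqP => /rowP/(_ (Ordinal hk)); rewrite !mxE; apply/eqP/oner_neq0.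
by have := mxrankS ones_ker; rewrite mxrank_ker rank_rV ones_neq0; lia.
Qed.

Lemma iupm_rank_ones_kstar (P : {set {set guser (kgic k)}}) : (0 < k)%N ->
  (forall W, W \in P -> exists2 n, (n < k)%N & Yset W = kstar k n) ->
  (iupm_rank P (ones_code 'F_2) <= k.-1)%N.
Proof.
move=> hk hP; apply: leq_trans (rank_kstar_mx hk); apply: mxrankS.
apply/sumsmx_subP => W /hP[n hn hY]; rewrite genmxE.
apply: submx_trans (ones_code_sub _ _) _; rewrite hY.
by rewrite -[setrow _ _](rowK (fun n => setrow 'F_2 (kstar k n)) (Ordinal hn)) row_sub.
Qed.

End KRank.

(* For k = 2 the k blocks would violate h <= m = 1, so all users form a single block. *)
Lemma kgic_partition k : 1 < k ->
  exists2 P : {set {set guser (kgic k)}},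
    partition P [set: guser (kgic k)] /\ 0 < #|P| <= km k &
    forall W, W \in P -> all_but_demand W /\ exists2 n, n < k & Yset W = kstar k n.
Proof.
move=> k_gt1; have [->|k_gt2] : k = 2 \/ 2 < k by lia.
  have one_pkt (i j : 'I_(km 2)) : i = j by apply: val_inj; case: i j => [[|?] ?] [[|?] ?].
  exists [set [set: guser (kgic 2)]].
    rewrite cards1; split=> //; apply/and3P; split; rewrite ?cover1 ?trivIset1 //.
    by rewrite inE eq_sym; apply/set0Pn; exists (ord0, ord0).
  move=> _ /set1P ->; split=> [u _|].
    by apply/setP => i; rewrite (one_pkt i (gdem u)) !inE eqxx.
  exists 0 => //; apply/setP => i; rewrite (one_pkt i ord0) inE.
  by apply/imsetP; exists (ord0, ord0).
exists (kblocks k); first split; first exact: kblocks_partition.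
  apply/andP; split; last by apply: leq_trans (leq_imset_card _ _) _; rewrite card_ord leq_km.
  rewrite card_gt0; apply/set0Pn; exists (kblock k 0).
  by apply/imsetP; exists (Ordinal (ltnW k_gt1)).
move=> _ /imsetP[n _ ->]; split; first exact: kblock_all_but_demand.
by exists n => //; apply: Yset_kblock.
Qed.

Lemma kgic_iupm_scheme k : 1 < k -> exists P n,
  [/\ partition P [set: guser (kgic k)], 0 < #|P| <= km k, iupm_achievable P n & n <= k.-1].
Proof.
move=> k_gt1; have [P [hP hPcard] hW] := kgic_partition k_gt1.
exists P, (iupm_rank P (ones_code 'F_2)); split=> //.
  by apply: ones_code_achievable => // W /hW[].
by apply: iupm_rank_ones_kstar (ltnW k_gt1) _ => W /hW[].
Qed.

Theorem proposition4 (R : realType) (k : nat) :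
  (2 <= k)%N -> beta_IUPM R (kgic k) = beta R (kgic k).
Proof.
move=> k_gt1; have [P [n [hP hPcard hA hn]]] := kgic_iupm_scheme k_gt1.
exact: (iupm_optimal R (kgic_code_lb k_gt1) hP hPcard hA hn).
Qed.
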